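(* Let $n\ge 2$ and $d\ge1$ be integers and consider the test $\mathcal{T}_d$ described below. For every $i\in[n]$, the polynomial $f(x)=x_i-x_{n+i}^d$ on $\mathbb{R}^{2n}$ passes $\mathcal{T}_d$ with probability at least $1-\beta$, where $\beta=1/\log n$.
   Context: The test $\mathcal{T}_d$ takes as input a degree-$d$ real polynomial $f:\mathbb{R}^{2n}\to\mathbb{R}$. Set $\beta:=1/\log n$ and $\delta:=2^{-n^2}$. Generate $n$ i.i.d. bits $a_i\in\{0,1\}$ with $\Pr[a_i=1]=\beta$, $2n$ i.i.d. standard Gaussians $h_1,\dots,h_n,g_1,\dots,g_n\sim N(0,1)$, and a uniformly random $b\in\{-1,1\}$, all independent. Set $y\in\mathbb{R}^{2n}$ by $y_i=a_ih_i+g_i^d+b\delta$ and $y_{n+i}=g_i$ for $i\in[n]$. The test accepts (f passes) iff $\mathrm{sign}(f(y))=b$. *)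

From HB Require Import structures.
From mathcomp Require Import all_boot all_order all_algebra.
From mathcomp Require Import all_classical all_reals all_analysis.
Set Implicit Arguments. Unset Strict Implicit. Unset Printing Implicit Defensive.
Import Order.TTheory GRing.Theory Num.Theory.
Local Open Scope classical_set_scope.
Local Open Scope ring_scope.

Definition mutually_independent (d : measure_display) (T : measurableType d)
  (R : realType) (P : probability T R) (I : finType) (X : I -> {RV P >-> R}) :=
  forall (J : {set I}) (B : I -> set R), (forall i, measurable (B i)) ->
    P [set w | forall i, i \in J -> B i (X i w)] =
    (\prod_(i in J) P (X i @^-1` B i))%E.

Definition beta_par (R : realType) (n : nat) : R := (ln (n%:R : R) / ln 2)^-1.
Definition delta_par (R : realType) (n : nat) : R := (2 ^- (n ^ 2)%N).

(* The query point y in R^{2n}, indexed by 'I_(n + n):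
   y_i = a_i h_i + g_i^d + b delta  (first block),  y_{n+i} = g_i (second block). *)
Definition test_point (R : realType) (n d : nat) (a h g : 'I_n -> R) (b : R)
  : 'I_(n + n) -> R :=
  fun k => match fintype.split k with
           | inl i => a i * h i + g i ^+ d + b * delta_par R n
           | inr i => g i
           end.

Definition test_family (d : measure_display) (T : measurableType d)
  (R : realType) (P : probability T R) (n : nat)
  (a h g : 'I_n -> {RV P >-> R}) (b : {RV P >-> R}) :
  ('I_n + 'I_n + 'I_n + unit)%type -> {RV P >-> R} :=
  fun k => match k with
           | inl (inl (inl i)) => a i
           | inl (inl (inr i)) => h i
           | inl (inr i) => g i
           | inr _ => b
           end.

Definition pass_prob (d : measure_display) (T : measurableType d)
  (R : realType) (P : probability T R) (n dd : nat)
  (a h g : 'I_n -> {RV P >-> R}) (b : {RV P >-> R})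
  (f : ('I_(n + n) -> R) -> R) : \bar R :=
  P [set w | Num.sg (f (test_point dd (fun i => a i w) (fun i => h i w)
                                      (fun i => g i w) (b w))) = b w].

From HB Require Import structures.
From mathcomp Require Import all_boot all_order all_algebra.
From mathcomp Require Import all_classical all_reals all_analysis.
From mathcomp Require Import lra.
Import Order.TTheory GRing.Theory Num.Theory.
Local Open Scope classical_set_scope.
Local Open Scope ring_scope.

(* On y, the polynomial x_i - x_{n+i}^d evaluates to a_i h_i + b delta: the
   g_i^d terms cancel.  Whenever a_i = 0 this is b delta with delta > 0, whose
   sign is b, so the test accepts.  Since b is +1 or -1 almost surely, the
   acceptance probability is at least Pr[a_i = 0] = 1 - beta. *)

Lemma delta_par_gt0 {R : realType} (n : nat) : 0 < delta_par R n.
Proof. by rewrite invr_gt0 exprn_gt0. Qed.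

Lemma test_point_lshift (R : realType) (n d : nat) (a h g : 'I_n -> R) (b : R)
    (i : 'I_n) :
  test_point d a h g b (lshift n i) = a i * h i + g i ^+ d + b * delta_par R n.
Proof. by rewrite /test_point -[lshift n i]/(unsplit (inl i)) unsplitK. Qed.

Lemma test_point_rshift (R : realType) (n d : nat) (a h g : 'I_n -> R) (b : R)
    (i : 'I_n) :
  test_point d a h g b (rshift n i) = g i.
Proof. by rewrite /test_point -[rshift n i]/(unsplit (inr i)) unsplitK. Qed.

Section sign.
Context {R : realFieldType}.

Lemma sgr_nondecreasing : nondecreasing_fun (@Num.sg R).
Proof.
move=> x y le_xy.
have [x_gt0|x_lt0|x0] := ltrgt0P x; have [y_gt0|y_lt0|y0] := ltrgt0P y;
  rewrite ?(ltr0_sg x_lt0) ?(gtr0_sg x_gt0) ?(ltr0_sg y_lt0) ?(gtr0_sg y_gt0)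
          ?x0 ?y0 ?sgr0; lra.
Qed.

Lemma sgrM_unit_sign {b e : R} : 0 < e -> b = 1 \/ b = -1 -> Num.sg (b * e) = b.
Proof. by move=> e_gt0 [->|->]; rewrite sgrM (gtr0_sg e_gt0) ?sgrN sgr1 mulr1. Qed.

End sign.

Section probability_facts.
Context {d : measure_display} {T : measurableType d} {R : realType}.

Lemma measurable_sgr_eq (F G : T -> R) :
  measurable_fun setT F -> measurable_fun setT G ->
  measurable [set w | Num.sg (F w) = G w].
Proof.
move=> mF mG.
have msgF : measurable_fun setT (Num.sg \o F).
  apply: measurableT_comp mF.
  exact: measurable_realfun.nondecreasing_measurable sgr_nondecreasing.
have -> : [set w | Num.sg (F w) = G w] = (Num.sg \o F \- G) @^-1` [set 0].
  apply/seteqP; split => w /=; first by move=> ->; rewrite subrr.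
  by move/eqP; rewrite subr_eq0 => /eqP.
rewrite -[_ @^-1` _]setTI.
exact: measurable_realfun.measurable_funB msgF mG measurableT _ (measurable_set1 _).
Qed.

Variable P : probability T R.

Lemma probability_setI_full {A B : set T} :
  measurable A -> measurable B -> P B = 1%E -> P (A `&` B) = P A.
Proof.
move=> mA mB PB1.
have PAnB : P (A `\` B) = 0%E.
  apply/eqP; rewrite eq_le measure_ge0 andbT.
  have <- : P (~` B) = 0%E by rewrite probability_setC // PB1 subee.
  by apply: le_measure; rewrite ?inE; [exact: measurableD|exact: measurableC|exact: subIsetr].
by rewrite (measureDI P mA mB) -[LHS]add0e; congr (_ + _)%E.
Qed.

Lemma probability_preimage_set2 (X : {RV P >-> R}) (x y : R) :
  x != y -> (P (X @^-1` [set x]) + P (X @^-1` [set y]))%E = 1%E ->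
  P (X @^-1` [set x; y]) = 1%E.
Proof.
move=> neq_xy <-; rewrite preimage_setU measureU //.
by apply/seteqP; split => w // [/= -> /eqP]; rewrite (negPf neq_xy).
Qed.

End probability_facts.

Theorem mainTheorem3 (R : realType) (n dd : nat) (hn : (2 <= n)%N) (hd : (1 <= dd)%N)
  (d : measure_display) (T : measurableType d) (P : probability T R)
  (a h g : 'I_n -> {RV P >-> R}) (b : {RV P >-> R})
  (ha1 : forall i, P (a i @^-1` [set 1]) = (beta_par R n)%:E)
  (ha0 : forall i, P (a i @^-1` [set 0]) = (1 - beta_par R n)%:E)
  (hh : forall i A, measurable A -> P (h i @^-1` A) = normal_prob 0 1 A)
  (hg : forall i A, measurable A -> P (g i @^-1` A) = normal_prob 0 1 A)
  (hb1 : P (b @^-1` [set 1]) = (1 / 2)%:E)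
  (hbm1 : P (b @^-1` [set -1]) = (1 / 2)%:E)
  (hind : mutually_independent (test_family a h g b))
  (i : 'I_n) :
  ((1 - beta_par R n)%:E <=
   pass_prob dd a h g b (fun x : 'I_(n + n) -> R => (x (lshift n i) - x (rshift n i) ^+ dd)%R))%E.
Proof.
set del := delta_par R n.
pose F w := a i w * h i w + b w * del.
have -> : pass_prob dd a h g b
    (fun x : 'I_(n + n) -> R => x (lshift n i) - x (rshift n i) ^+ dd) =
    P [set w | Num.sg (F w) = b w].
  congr (P _); apply/funext => w /=.
  by rewrite test_point_lshift test_point_rshift addrAC addrK.
have mF : measurable_fun setT F.
  apply: measurable_realfun.measurable_funD;
    by apply: measurable_realfun.measurable_funM => //; exact: measurable_cst.
have ma0 : measurable (a i @^-1` [set 0]) by exact: measurable_funPTI (measurable_set1 _).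
have mb : measurable (b @^-1` [set 1; -1]).
  by apply: measurable_funPTI; apply: measurableU; exact: measurable_set1.
have Pb : P (b @^-1` [set 1; -1]) = 1%E.
  apply: probability_preimage_set2; first by rewrite -subr_eq0 opprK -mulr2n pnatr_eq0.
  by rewrite hb1 hbm1 -EFinD -splitr.
rewrite -(ha0 i) -(probability_setI_full P ma0 mb Pb).
have mpass : measurable [set w | Num.sg (F w) = b w].
  exact: measurable_sgr_eq mF (measurable_funPT b).
apply: le_measure; rewrite ?inE //; first exact: measurableI.
move=> w [/= a0 b_sign]; rewrite /F a0 mul0r add0r.
exact: sgrM_unit_sign (delta_par_gt0 n) b_sign.
Qed.
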